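(* Let $\mathcal{C}$ be a symmetric monoidal $\infty$-category, let $I \in \mathcal{C}$ be an invertible object, and let $I \xrightarrow{e} X \xrightarrow{f} I$ be a retraction (i.e. $f \circ e \simeq \mathrm{id}_I$). Suppose that $X$ is symmetric, meaning that for some $n \ge 2$ the cyclic permutation of the factors of $X^{\otimes n}$ is homotopic to the identity. Then $e$ and $f$ are mutually inverse equivalences. *)

From Stdlib Require Import Arith.
Set Implicit Arguments.

Record SymMonCat := {
  ob :> Type;
  hom : ob -> ob -> Type;
  idm : forall a, hom a a;
  comp : forall a b c, hom b c -> hom a b -> hom a c;
  comp_id_l : forall a b (g : hom a b), comp (idm b) g = g;
  comp_id_r : forall a b (g : hom a b), comp g (idm a) = g;
  comp_assoc : forall a b c d (h : hom c d) (g : hom b c) (k : hom a b),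
      comp h (comp g k) = comp (comp h g) k;
  tens : ob -> ob -> ob;
  tensm : forall a b c d, hom a b -> hom c d -> hom (tens a c) (tens b d);
  tensm_id : forall a c, tensm (idm a) (idm c) = idm (tens a c);
  tensm_comp : forall a b x c d y (g : hom b x) (g' : hom a b)
                      (h : hom d y) (h' : hom c d),
      tensm (comp g g') (comp h h') = comp (tensm g h) (tensm g' h');
  unit : ob;
  assoc : forall a b c, hom (tens (tens a b) c) (tens a (tens b c));
  assoc_inv : forall a b c, hom (tens a (tens b c)) (tens (tens a b) c);
  assoc_iso1 : forall a b c, comp (assoc_inv a b c) (assoc a b c) = idm _;
  assoc_iso2 : forall a b c, comp (assoc a b c) (assoc_inv a b c) = idm _;
  lunit : forall a, hom (tens unit a) a;
  lunit_inv : forall a, hom a (tens unit a);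
  lunit_iso1 : forall a, comp (lunit_inv a) (lunit a) = idm _;
  lunit_iso2 : forall a, comp (lunit a) (lunit_inv a) = idm _;
  runit : forall a, hom (tens a unit) a;
  runit_inv : forall a, hom a (tens a unit);
  runit_iso1 : forall a, comp (runit_inv a) (runit a) = idm _;
  runit_iso2 : forall a, comp (runit a) (runit_inv a) = idm _;
  braid : forall a b, hom (tens a b) (tens b a);
  assoc_nat : forall a a' b b' c c' (f : hom a a') (g : hom b b') (h : hom c c'),
      comp (assoc a' b' c') (tensm (tensm f g) h)
      = comp (tensm f (tensm g h)) (assoc a b c);
  lunit_nat : forall a a' (f : hom a a'),
      comp (lunit a') (tensm (idm unit) f) = comp f (lunit a);
  runit_nat : forall a a' (f : hom a a'),
      comp (runit a') (tensm f (idm unit)) = comp f (runit a);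
  braid_nat : forall a a' b b' (f : hom a a') (g : hom b b'),
      comp (braid a' b') (tensm f g) = comp (tensm g f) (braid a b);
  pentagon : forall a b c d,
      comp (assoc a b (tens c d)) (assoc (tens a b) c d)
      = comp (tensm (idm a) (assoc b c d))
             (comp (assoc a (tens b c) d) (tensm (assoc a b c) (idm d)));
  triangle : forall a b,
      comp (tensm (idm a) (lunit b)) (assoc a unit b)
      = tensm (runit a) (idm b);
  hexagon : forall a b c,
      comp (assoc b c a) (comp (braid a (tens b c)) (assoc a b c))
      = comp (tensm (idm b) (braid a c))
             (comp (assoc b a c) (tensm (braid a b) (idm c)));
  braid_sym : forall a b, comp (braid b a) (braid a b) = idm (tens a b)
}.

Arguments idm {C} a : rename.
Arguments comp {C a b c} _ _ : rename.
Arguments tens {C} _ _ : rename.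
Arguments tensm {C a b c d} _ _ : rename.
Arguments unit {C} : rename.
Arguments braid {C} a b : rename.
Arguments assoc {C} a b c : rename.
Arguments lunit {C} a : rename.
Arguments runit_inv {C} a : rename.

Section Defs.
Variable C : SymMonCat.

Definition is_iso (a b : C) (g : hom C a b) : Prop :=
  exists h : hom C b a, comp h g = idm a /\ comp g h = idm b.

Definition invertible_object (I : C) : Prop :=
  exists (J : C) (u : hom C (tens I J) unit), is_iso (tens I J) unit u.

Fixpoint tpow (X : C) (n : nat) : C :=
  match n with
  | 0 => unit
  | S m => tens X (tpow X m)
  end.

Fixpoint shift (X : C) (n : nat) : hom C (tens (tpow X n) X) (tpow X (S n)) :=
  match n return hom C (tens (tpow X n) X) (tpow X (S n)) with
  | 0 => comp (runit_inv X) (lunit X)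
  | S m => comp (tensm (idm X) (shift X m)) (assoc X (tpow X m) X)
  end.

(* The cyclic permutation of the factors of X^(n):
   x1 (x) x2 (x) ... (x) xn  |-->  x2 (x) ... (x) xn (x) x1.
   For n = 0 it is the identity of the unit. *)
Definition cyclic_perm (X : C) (n : nat) : hom C (tpow X n) (tpow X n) :=
  match n return hom C (tpow X n) (tpow X n) with
  | 0 => idm unit
  | S m => comp (shift X m) (braid X (tpow X m))
  end.

(* X is symmetric: for some n >= 2 the cyclic permutation of X^(n) is
   (homotopic, i.e. equal in the homotopy category, to) the identity. *)
Definition symmetric_object (X : C) : Prop :=
  exists n, 2 <= n /\ cyclic_perm X n = idm (tpow X n).

End Defs.
Arguments is_iso {C a b} g.
Arguments invertible_object {C} I.
Arguments symmetric_object {C} X.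

(* Since f e = id, the endomorphism p := e f satisfies f p e = id_I.  The cyclic
   permutation of X^(n) is natural, so it carries p acting on the first factor
   to p acting on the last one; as it is the identity, p (x) id = id (x) p' where
   p' acts by p on the last factor of X^(n-1).  Tensoring with an invertible
   object, and hence with any object having it as a retract, is faithful:
   conjugating by e (x) id and f (x) id turns the identity above into
   id_I (x) p' = id, whence p' = id and, peeling off the other factors, p = id. *)
From Stdlib Require Import Lia.

Section TensorFaithful.
Context {C : SymMonCat}.

Lemma runit_inv_nat {A A' : C} (g : hom C A A') :
  comp (tensm g (idm unit)) (runit_inv A) = comp (runit_inv A') g.
Proof.
  rewrite <- (comp_id_l C _ _ (comp (tensm g (idm unit)) (runit_inv A))).
  rewrite <- (runit_iso1 C A'), <- comp_assoc, (comp_assoc C _ _ _ _ (runit C A')).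
  rewrite runit_nat, <- comp_assoc, runit_iso2, comp_id_r.
  reflexivity.
Qed.

Definition tens_faithful (A : C) : Prop :=
  forall (Z Z' : C) (g h : hom C Z Z'),
    tensm (idm A) g = tensm (idm A) h -> g = h.

Lemma tensm_retract_conj {A B Z Z' : C} (w : hom C A B) (w' : hom C B A)
    (ww' : comp w w' = idm B) (g : hom C Z Z') :
  comp (tensm w (idm Z')) (comp (tensm (idm A) g) (tensm w' (idm Z)))
  = tensm (idm B) g.
Proof.
  rewrite <- !tensm_comp, !comp_id_l, !comp_id_r, ww'.
  reflexivity.
Qed.

Lemma tens_faithful_retract {A B : C} (w : hom C A B) (w' : hom C B A) :
  comp w w' = idm B -> tens_faithful B -> tens_faithful A.
Proof.
  intros ww' hB Z Z' g h E.
  apply hB.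
  rewrite <- (tensm_retract_conj w w' ww' g), <- (tensm_retract_conj w w' ww' h).
  rewrite E.
  reflexivity.
Qed.

Lemma tens_faithful_unit : tens_faithful unit.
Proof.
  intros Z Z' g h E.
  rewrite <- (comp_id_r C _ _ g), <- (comp_id_r C _ _ h), <- (lunit_iso2 C Z).
  rewrite !comp_assoc, <- !lunit_nat, E.
  reflexivity.
Qed.

Lemma tensm_id_tens {A B Z Z' : C} (g : hom C Z Z') :
  tensm (idm (tens A B)) g
  = comp (assoc_inv C A B Z') (comp (tensm (idm A) (tensm (idm B) g)) (assoc A B Z)).
Proof.
  rewrite <- assoc_nat, comp_assoc, assoc_iso1, comp_id_l, tensm_id.
  reflexivity.
Qed.

Lemma tens_faithful_tensr {A B : C} :
  tens_faithful (tens A B) -> tens_faithful B.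
Proof.
  intros hAB Z Z' g h E.
  apply hAB.
  rewrite !tensm_id_tens, E.
  reflexivity.
Qed.

Lemma invertible_tens_faithful {I : C} :
  invertible_object I -> tens_faithful I.
Proof.
  intros [J [u [v [_ uv]]]].
  apply (tens_faithful_tensr (A := J)).
  apply (tens_faithful_retract (comp u (braid J I)) (comp (braid I J) v)).
  - rewrite <- comp_assoc, (comp_assoc C _ _ _ _ (braid J I)), braid_sym, comp_id_l.
    exact uv.
  - exact tens_faithful_unit.
Qed.

End TensorFaithful.

Section CyclicPermutation.
Context {C : SymMonCat} {X : C}.

Fixpoint tpow_last (a : hom C X X) (k : nat) :
    hom C (tpow C X (S k)) (tpow C X (S k)) :=
  match k return hom C (tpow C X (S k)) (tpow C X (S k)) with
  | 0 => tensm a (idm unit)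
  | S j => tensm (idm X) (tpow_last a j)
  end.

Lemma shift_nat (a : hom C X X) (k : nat) :
  comp (shift C X k) (tensm (idm (tpow C X k)) a) = comp (tpow_last a k) (shift C X k).
Proof.
  induction k as [|k IH]; cbn [shift tpow_last tpow] in *.
  - rewrite <- comp_assoc, lunit_nat, !comp_assoc, runit_inv_nat.
    reflexivity.
  - rewrite <- comp_assoc, <- (tensm_id C X (tpow C X k)), assoc_nat, comp_assoc.
    rewrite <- tensm_comp, IH, comp_id_l, comp_assoc, <- tensm_comp, comp_id_l.
    reflexivity.
Qed.

Lemma cyclic_perm_nat (a : hom C X X) (k : nat) :
  comp (cyclic_perm C X (S k)) (tensm a (idm (tpow C X k)))
  = comp (tpow_last a k) (cyclic_perm C X (S k)).
Proof.
  cbn [cyclic_perm].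
  rewrite <- comp_assoc, braid_nat, comp_assoc, shift_nat, comp_assoc.
  reflexivity.
Qed.

Lemma tpow_last_eq_id (a : hom C X X) (k : nat) :
  tens_faithful X -> tpow_last a k = idm (tpow C X (S k)) -> a = idm X.
Proof.
  intros hX.
  induction k as [|k IH]; cbn [tpow_last]; intros E.
  - rewrite <- (comp_id_r C _ _ a), <- (runit_iso2 C X), comp_assoc.
    rewrite <- runit_nat, E, comp_id_r.
    reflexivity.
  - apply IH, hX.
    rewrite E, tensm_id.
    reflexivity.
Qed.

End CyclicPermutation.

Theorem proposition2p1 (C : SymMonCat) (I X : C)
    (hI : invertible_object I)
    (e : hom C I X) (f : hom C X I)
    (hret : comp f e = idm I)
    (hX : symmetric_object X) :
  comp e f = idm X /\ comp f e = idm I.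
Proof.
  split; [|exact hret].
  destruct hX as [n [hn hcyc]].
  destruct n as [|[|k]]; [lia | lia |].
  set (p := comp e f).
  pose proof (invertible_tens_faithful hI) as hIfaith.
  apply (tpow_last_eq_id p k).
  { exact (tens_faithful_retract f e hret hIfaith). }
  assert (hp_last : tensm p (idm (tpow C X (S k))) = tensm (idm X) (tpow_last p k)).
  { pose proof (cyclic_perm_nat p (S k)) as hnat.
    rewrite hcyc, comp_id_l, comp_id_r in hnat.
    exact hnat. }
  assert (hpe : comp p e = e).
  { unfold p; rewrite <- comp_assoc, hret, comp_id_r; reflexivity. }
  apply hIfaith.
  rewrite <- (tensm_retract_conj f e hret (tpow_last p k)), <- hp_last.
  rewrite <- !tensm_comp, !comp_id_l.
  rewrite hpe, hret, tensm_id.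
  reflexivity.
Qed.
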